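(* For any time warps $f,g$ and any $p\in\overline{\omega}$: (a) $(f\backslash g)(p)=0$ if $p=0$; $(f\backslash g)(p)=\bigvee\{q\in\overline{\omega}\mid f(q)\le g(p)\}$ if $p\in\omega\setminus\{0\}$; and $(f\backslash g)(p)=\bigvee\{q\in\overline{\omega}\mid \exists m\in\omega\,(f(q)\le g(m))\}$ if $p=\omega$. (b) $(g/f)(p)=\bigwedge\{g(q)\mid q\in\overline{\omega},\ p\le f(q)\}$ (with $\bigwedge\emptyset=\omega$).
   Context: Let $\overline{\omega}=\omega\cup\{\omega\}$ be the natural numbers with a top element $\omega$ adjoined, with its natural total order. A time warp is a monotone map $f\colon\overline{\omega}\to\overline{\omega}$ with $f(0)=0$ and $f(\omega)=\bigvee\{f(n)\mid n\in\omega\}$. The set $W$ of time warps is ordered pointwise; $fg:=f\circ g$. The residuals $\backslash,/$ are the binary operations on $W$ satisfying, for all $f,g,h\in W$: $f\le h/g \iff fg\le h \iff g\le f\backslash h$. *)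

From Stdlib Require Import Arith.

(* omega-bar = natural numbers with a top element Om adjoined. *)
Inductive nbar : Type := Fin (n : nat) | Om.

Definition nle (x y : nbar) : Prop :=
  match x, y with
  | Fin m, Fin n => m <= n
  | _, Om => True
  | Om, Fin _ => False
  end.

Definition is_sup (S : nbar -> Prop) (s : nbar) : Prop :=
  (forall x, S x -> nle x s) /\ (forall u, (forall x, S x -> nle x u) -> nle s u).

(* s is the infimum (meet) of S in omega-bar (meet of the empty set is Om) *)
Definition is_inf (S : nbar -> Prop) (s : nbar) : Prop :=
  (forall x, S x -> nle s x) /\ (forall l, (forall x, S x -> nle l x) -> nle l s).

Record warp : Type := Warp {
  wfun :> nbar -> nbar;
  warp_mono : forall x y, nle x y -> nle (wfun x) (wfun y);
  warp_zero : wfun (Fin 0) = Fin 0;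
  warp_omega : is_sup (fun y => exists n, y = wfun (Fin n)) (wfun Om)
}.

Definition wle (f g : warp) : Prop := forall x, nle (f x) (g x).

(* fg <= h, with fg := f o g *)
Definition comp_le (f g h : warp) : Prop := forall x, nle (f (g x)) (h x).

(* The residuals are pinned down by testing them against step warps, which are
   0 up to a threshold t and constantly v above it: f \ g dominates the step
   warp with value q whenever f q <= g x beyond the threshold, and g / f
   dominates the step warp with value l whenever l <= g q for all q with f q
   beyond the threshold.  This gives every clause at finite arguments; at
   omega, f \ g is the join of its finite values, while for g / f one needs a
   finite threshold n such that f q > n forces g q >= k for each finite
   k <= l.  Such an n exists because g reaches k at some finite m (finite
   elements are compact), and f takes only finitely many finite values below
   m. *)

From Stdlib Require Import Arith Lia Classical.

Lemma nle_refl x : nle x x.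
Proof. destruct x; simpl; auto. Qed.

Lemma nle_trans x y z : nle x y -> nle y z -> nle x z.
Proof. destruct x, y, z; simpl; intros; auto; try lia; contradiction. Qed.

Lemma nle_Fin0 x : nle (Fin 0) x.
Proof. destruct x; simpl; auto; lia. Qed.

Lemma nle_Om x : nle x Om.
Proof. destruct x; simpl; auto. Qed.

Lemma nle_dec x y : {nle x y} + {~ nle x y}.
Proof. destruct x, y; simpl; auto using le_dec. Qed.

Lemma nle_total x y : ~ nle x y -> nle y x.
Proof. destruct x, y; simpl; intros; auto; try lia; tauto. Qed.

Lemma not_nle_Fin x n : ~ nle x (Fin n) <-> nle (Fin (S n)) x.
Proof. destruct x; simpl; split; intros; auto; lia. Qed.

Lemma nle_Fin_ext x y : (forall k, nle (Fin k) x -> nle (Fin k) y) -> nle x y.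
Proof.
  intro H. destruct x as [n|].
  - apply H, nle_refl.
  - destruct y as [m|]; simpl; auto. specialize (H (S m) I). simpl in H. lia.
Qed.

Lemma is_sup_greatest (S : nbar -> Prop) s :
  S s -> (forall x, S x -> nle x s) -> is_sup S s.
Proof. intros Ss Hs. split; [exact Hs|]. intros u Hu. apply Hu, Ss. Qed.

Lemma prefix_bound (u : nat -> nbar) m :
  exists n, forall i, i < m -> u i = Om \/ nle (u i) (Fin n).
Proof.
  induction m as [|m [n Hn]].
  - exists 0. intros; lia.
  - destruct (u m) as [N|] eqn:Em.
    + exists (Nat.max n N). intros i Hi.
      destruct (Nat.eq_dec i m) as [->|Him].
      * right. rewrite Em. simpl. lia.
      * destruct (Hn i ltac:(lia)) as [Hi'|Hi']; [left; exact Hi'|right].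
        apply (nle_trans _ _ _ Hi'). simpl. lia.
    + exists n. intros i Hi.
      destruct (Nat.eq_dec i m) as [->|Him]; [left; exact Em|apply Hn; lia].
Qed.

Lemma warp_le_Om (f : warp) x : nle (f x) (f Om).
Proof. apply warp_mono, nle_Om. Qed.

Lemma Fin_le_warp_Om (g : warp) k :
  nle (Fin k) (g Om) -> exists m, nle (Fin k) (g (Fin m)).
Proof.
  intro Hk. destruct k as [|k]; [exists 0; apply nle_Fin0|].
  apply NNPP. intro Hno.
  assert (Hbound : nle (g Om) (Fin k)).
  { apply (proj2 (warp_omega g)). intros y [m ->].
    destruct (nle_dec (g (Fin m)) (Fin k)) as [Hm|Hm]; [exact Hm|].
    exfalso. apply Hno. exists m. apply not_nle_Fin, Hm. }
  pose proof (nle_trans _ _ _ Hk Hbound) as Hcontra. simpl in Hcontra. lia.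
Qed.

Lemma exists_threshold (f g : warp) k :
  (forall q, f q = Om -> nle (Fin k) (g q)) ->
  exists n, forall q, ~ nle (f q) (Fin n) -> nle (Fin k) (g q).
Proof.
  intro Hinf. destruct (f Om) as [N|] eqn:Ef.
  - exists N. intros q Hq. exfalso. apply Hq. rewrite <- Ef. apply warp_le_Om.
  - destruct (Fin_le_warp_Om g k (Hinf Om Ef)) as [m Hm].
    destruct (prefix_bound (fun i => f (Fin i)) m) as [n Hn].
    exists n. intros [i|] Hq.
    + destruct (lt_dec i m) as [Hi|Hi].
      * destruct (Hn i Hi) as [Hfi|Hfi]; [auto|contradiction].
      * apply (nle_trans _ _ _ Hm). apply warp_mono. simpl. lia.
    + apply (nle_trans _ _ _ Hm), warp_le_Om.
Qed.

Section StepWarp.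

Variables (t : nat) (v : nbar).

Definition step_fun (x : nbar) : nbar := if nle_dec x (Fin t) then Fin 0 else v.

Lemma step_fun_lo x : nle x (Fin t) -> step_fun x = Fin 0.
Proof. unfold step_fun. destruct (nle_dec x (Fin t)); tauto. Qed.

Lemma step_fun_hi x : ~ nle x (Fin t) -> step_fun x = v.
Proof. unfold step_fun. destruct (nle_dec x (Fin t)); tauto. Qed.

Lemma step_fun_le x : nle (step_fun x) v.
Proof. unfold step_fun. destruct (nle_dec x (Fin t)); auto using nle_Fin0, nle_refl. Qed.

Lemma step_fun_mono x y : nle x y -> nle (step_fun x) (step_fun y).
Proof.
  intro Hxy. destruct (nle_dec x (Fin t)) as [Hx|Hx].
  - rewrite (step_fun_lo x Hx). apply nle_Fin0.
  - rewrite (step_fun_hi y); [apply step_fun_le|].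
    intro Hy. exact (Hx (nle_trans _ _ _ Hxy Hy)).
Qed.

Lemma step_fun_zero : step_fun (Fin 0) = Fin 0.
Proof. apply step_fun_lo, nle_Fin0. Qed.

Lemma step_fun_omega : is_sup (fun y => exists n, y = step_fun (Fin n)) (step_fun Om).
Proof.
  rewrite step_fun_hi by (simpl; tauto). split.
  - intros y [n ->]. apply step_fun_le.
  - intros u Hu. apply Hu. exists (S t). symmetry. apply step_fun_hi. simpl. lia.
Qed.

Definition step_warp : warp :=
  Warp step_fun step_fun_mono step_fun_zero step_fun_omega.

End StepWarp.

Section LeftResidual.

Variables f g k : warp.
Hypothesis k_ldiv : forall h : warp, comp_le f h g <-> wle h k.

Lemma ldiv_cancel : comp_le f k g.
Proof. apply k_ldiv. intro x. apply nle_refl. Qed.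

Lemma ldiv_ge_step t q :
  (forall x, ~ nle x (Fin t) -> nle (f q) (g x)) ->
  forall x, ~ nle x (Fin t) -> nle q (k x).
Proof.
  intros Hq x Hx. rewrite <- (step_fun_hi t q x Hx).
  apply (proj1 (k_ldiv (step_warp t q))). intro y. simpl.
  destruct (nle_dec y (Fin t)) as [Hy|Hy].
  - rewrite (step_fun_lo t q y Hy), warp_zero. apply nle_Fin0.
  - rewrite (step_fun_hi t q y Hy). apply Hq, Hy.
Qed.

Lemma ldiv_FinS_spec n :
  is_sup (fun q => nle (f q) (g (Fin (S n)))) (k (Fin (S n))).
Proof.
  apply is_sup_greatest; [apply ldiv_cancel|].
  intros q Hq. apply (ldiv_ge_step n); [|apply not_nle_Fin, nle_refl].
  intros x Hx. apply (nle_trans _ _ _ Hq), warp_mono, not_nle_Fin, Hx.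
Qed.

Lemma ldiv_Om_spec : is_sup (fun q => exists m, nle (f q) (g (Fin m))) (k Om).
Proof.
  split.
  - intros q [m Hq]. apply (ldiv_ge_step m); [|simpl; tauto].
    intros x Hx. apply (nle_trans _ _ _ Hq), warp_mono, nle_total, Hx.
  - intros u Hu. apply (proj2 (warp_omega k)). intros y [n ->].
    apply Hu. exists n. apply ldiv_cancel.
Qed.

End LeftResidual.

Section RightResidual.

Variables g f r : warp.
Hypothesis r_rdiv : forall h : warp, comp_le h f g <-> wle h r.

Lemma rdiv_cancel : comp_le r f g.
Proof. apply r_rdiv. intro x. apply nle_refl. Qed.

Lemma rdiv_lower p q : nle p (f q) -> nle (r p) (g q).
Proof. intro Hpq. exact (nle_trans _ _ _ (warp_mono r _ _ Hpq) (rdiv_cancel q)). Qed.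

Lemma rdiv_ge_step t l :
  (forall q, ~ nle (f q) (Fin t) -> nle l (g q)) ->
  forall p, ~ nle p (Fin t) -> nle l (r p).
Proof.
  intros Hl p Hp. rewrite <- (step_fun_hi t l p Hp).
  apply (proj1 (r_rdiv (step_warp t l))). intro q. simpl.
  destruct (nle_dec (f q) (Fin t)) as [Hq|Hq].
  - rewrite (step_fun_lo t l _ Hq). apply nle_Fin0.
  - rewrite (step_fun_hi t l _ Hq). apply Hl, Hq.
Qed.

Lemma rdiv_Om_ge l : (forall q, f q = Om -> nle l (g q)) -> nle l (r Om).
Proof.
  intro Hl. apply nle_Fin_ext. intros k Hk.
  destruct (exists_threshold f g k) as [n Hn].
  { intros q Hq. apply (nle_trans _ _ _ Hk), Hl, Hq. }
  apply nle_trans with (r (Fin (S n))); [|apply warp_le_Om].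
  apply (rdiv_ge_step n); [exact Hn|apply not_nle_Fin, nle_refl].
Qed.

Lemma rdiv_spec p : is_inf (fun y => exists q, nle p (f q) /\ y = g q) (r p).
Proof.
  split.
  - intros y [q [Hpq ->]]. apply rdiv_lower, Hpq.
  - intros l Hl. destruct p as [[|n]|].
    + rewrite (warp_zero r), <- (warp_zero g). apply Hl.
      exists (Fin 0). rewrite (warp_zero f). split; [apply nle_refl|reflexivity].
    + apply (rdiv_ge_step n); [|apply not_nle_Fin, nle_refl].
      intros q Hq. apply Hl. exists q. split; [apply not_nle_Fin, Hq|reflexivity].
    + apply rdiv_Om_ge. intros q Hq. apply Hl.
      exists q. rewrite Hq. split; [apply nle_refl|reflexivity].
Qed.

End RightResidual.

Theorem lemma2p1
  (ldiv rdiv : warp -> warp -> warp)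
  (* ldiv f h = f \ h ,  rdiv h g = h / g *)
  (Hres : forall f g h : warp,
     (wle f (rdiv h g) <-> comp_le f g h) /\ (comp_le f g h <-> wle g (ldiv f h)))
  (f g : warp) (p : nbar) :
  (p = Fin 0 -> ldiv f g p = Fin 0) /\
  (forall n, p = Fin (S n) ->
     is_sup (fun q => nle (f q) (g p)) (ldiv f g p)) /\
  (p = Om ->
     is_sup (fun q => exists m, nle (f q) (g (Fin m))) (ldiv f g p)) /\
  is_inf (fun y => exists q, nle p (f q) /\ y = g q) (rdiv g f p).
Proof.
  assert (Hl : forall h, comp_le f h g <-> wle h (ldiv f g)) by (intro h; apply Hres).
  assert (Hr : forall h, comp_le h f g <-> wle h (rdiv g f))
    by (intro h; symmetry; apply Hres).
  split; [|split; [|split]].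
  - intros ->. apply warp_zero.
  - intros n ->. apply ldiv_FinS_spec, Hl.
  - intros ->. apply ldiv_Om_spec, Hl.
  - apply rdiv_spec, Hr.
Qed.
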